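(* Consider the discrete-time $Geo^X/G_r^{(a,b)}/1$ queue with single ($\delta=0$) or multiple ($\delta=1$) vacations described in the context, and let $p_{n,0}$, $p_{n,r}(u)$, $Q_n(u)$ be nonnegative numbers satisfying the stationary equations (E1)–(E8) and the normalization condition (N) given there. Then $$\tau:=\sum_{m=0}^{\infty}\sum_{r=a}^{b}p_{m,r}(1)+\sum_{m=0}^{\infty}Q_m(1)=\frac{1-(1-\delta)\sum_{n=0}^{a-1}p_{n,0}}{\omega},$$ where $$\omega=\sum_{n=0}^{a-1}\Big[p^+_nE(V)+\delta Q^+_nE(V)+(1-\delta)Q^+_n\Big\{\sum_{j=n}^{a-1}e_{j,n}\Big(\sum_{i=a}^{b}g_{i-j}s_i+\sum_{i=b+1-j}^{\infty}g_is_b\Big)\Big\}\Big]+\sum_{n=a}^{b}(p^+_n+Q^+_n)s_n+\sum_{n=b+1}^{\infty}(p^+_n+Q^+_n)s_b .$$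
   Context: Time is slotted. Fix integers $1\le a\le b$, a number $\lambda\in(0,1)$ with $\bar\lambda=1-\lambda$, and a group-size distribution $(g_m)_{m\ge1}$ ($g_m\ge0$, $\sum_m g_m=1$, finite mean $\bar g$, pgf $G(z)=\sum_{m\ge1}g_mz^m$); put $g_m=0$ for $m\le0$. In each slot a group of customers arrives with probability $\lambda$, its size having distribution $(g_m)$ (compound Bernoulli arrivals). Service is by the general bulk rule $(a,b)$: service starts only if at least $a$ customers wait; if $r$ wait with $a\le r\le b$ all are taken, if more than $b$ wait exactly $b$ are taken. The service time of a batch of size $r$ ($a\le r\le b$) has pmf $s_r(n)$, $n\ge1$, pgf $S_r^*(z)=\sum_{n\ge1}s_r(n)z^n$ and finite mean $s_r=\sum_n n s_r(n)$; $\mu_b=1/s_b$. Vacation times have pmf $v_n$, $n\ge1$, pgf $V^*(z)=\sum_{n\ge1}v_nz^n$ and finite mean $E(V)$. $\delta=0$ means single vacation (after a vacation, if fewer than $a$ customers wait, the server stays dormant until $a$ have accumulated), $\delta=1$ means multiple vacations (the server keeps taking vacations until at least $a$ wait). It is assumed $\rho=\lambda\bar g/(b\mu_b)<1$. Stationary probabilities: $p_{n,0}$ ($0\le n\le a-1$; server dormant, $n$ waiting), $p_{n,r}(u)$ ($n\ge0$, $a\le r\le b$, $u\ge1$; server busy with a batch of size $r$, $n$ waiting, remaining service time $u$), $Q_n(u)$ ($n\ge0$, $u\ge1$; server on vacation, $n$ waiting, remaining vacation time $u$). They satisfy: (E1) $p_{0,0}=(1-\delta)[\bar\lambda p_{0,0}+\bar\lambda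 Q_0(1)]$; (E2) $p_{n,0}=(1-\delta)[\bar\lambda p_{n,0}+\lambda\sum_{i=1}^ng_ip_{n-i,0}+\bar\lambda Q_n(1)+\lambda\sum_{i=1}^ng_iQ_{n-i}(1)]$, $1\le n\le a-1$; (E3) for $a\le r\le b$, $u\ge1$: $p_{0,r}(u)=\bar\lambda p_{0,r}(u+1)+s_r(u)\big[\sum_{m=a}^b\big(\bar\lambda p_{r,m}(1)+\lambda\sum_{i=1}^rg_ip_{r-i,m}(1)\big)+\bar\lambda Q_r(1)+\lambda\sum_{i=1}^rg_iQ_{r-i}(1)+(1-\delta)\lambda\sum_{i=0}^{a-1}g_{r-i}p_{i,0}\big]$; (E4) for $n\ge1$, $a\le r\le b-1$, $u\ge1$: $p_{n,r}(u)=\bar\lambda p_{n,r}(u+1)+\lambda\sum_{i=1}^ng_ip_{n-i,r}(u+1)$; (E5) for $n\ge1$, $u\ge1$: $p_{n,b}(u)=\bar\lambda p_{n,b}(u+1)+\lambda\sum_{i=1}^ng_ip_{n-i,b}(u+1)+s_b(u)\big[\sum_{m=a}^b\big(\bar\lambda p_{n+b,m}(1)+\lambda\sum_{i=1}^{n+b}g_ip_{n+b-i,m}(1)\big)+\bar\lambda Q_{n+b}(1)+\lambda\sum_{i=1}^{n+b}g_iQ_{n+b-i}(1)+(1-\delta)\lambda\sum_{i=0}^{a-1}g_{n+b-i}p_{i,0}\big]$; (E6) $Q_0(u)=\bar\lambda Q_0(u+1)+\bar\lambda\big(\sum_{m=a}^bp_{0,m}(1)+\delta Q_0(1)\big)v_u$;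 (E7) for $1\le n\le a-1$: $Q_n(u)=\bar\lambda Q_n(u+1)+\lambda\sum_{i=1}^ng_iQ_{n-i}(u+1)+v_u\big[\bar\lambda\big(\sum_{m=a}^bp_{n,m}(1)+\delta Q_n(1)\big)+\lambda\sum_{i=1}^ng_i\big(\sum_{m=a}^bp_{n-i,m}(1)+\delta Q_{n-i}(1)\big)\big]$; (E8) for $n\ge a$: $Q_n(u)=\bar\lambda Q_n(u+1)+\lambda\sum_{i=1}^ng_iQ_{n-i}(u+1)$; (N) $(1-\delta)\sum_{n=0}^{a-1}p_{n,0}+\sum_{n\ge0}\sum_{r=a}^b\sum_{u\ge1}p_{n,r}(u)+\sum_{n\ge0}\sum_{u\ge1}Q_n(u)=1$. Probabilities at service-completion / vacation-termination epochs: with $\tau$ as in the claim, $p^+_{0,r}=\tau^{-1}\bar\lambda p_{0,r}(1)$, $p^+_{n,r}=\tau^{-1}(\bar\lambda p_{n,r}(1)+\lambda\sum_{i=1}^ng_ip_{n-i,r}(1))$ for $n\ge1$, $a\le r\le b$; $p^+_n=\sum_{r=a}^bp^+_{n,r}$; $Q^+_0=\tau^{-1}\bar\lambda Q_0(1)$, $Q^+_n=\tau^{-1}(\bar\lambda Q_n(1)+\lambda\sum_{i=1}^ng_iQ_{n-i}(1))$ for $n\ge1$. The numbers $e_{n,i}$ ($0\le i\le n$) are defined by $e_{n,n}=1$, $e_{n,n-1}=g_1$, and $e_{n,i}=\sum_{j=i+1}^{n-1}e_{n,j}g_{j-i}+g_{n-i}$ for $0\le i\le n-2$. *)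

From mathcomp Require Import all_boot all_order all_algebra.
From mathcomp Require Import all_classical all_reals all_analysis.
Set Implicit Arguments. Unset Strict Implicit. Unset Printing Implicit Defensive.
Import Order.TTheory GRing.Theory Num.Theory.
Local Open Scope ring_scope.

Section Defs.
Variable R : realType.

Definition esum_from (m : nat) (f : nat -> R) : \bar R :=
  (\sum_(m <= n <oo) (f n)%:E)%E.

(* e_{n,i}:  e_{n,n} = 1, e_{n,n-1} = g_1,
   e_{n,i} = sum_{j=i+1}^{n-1} e_{n,j} g_{j-i} + g_{n-i}  (0 <= i <= n-2);
   [fuel] bounds the recursion depth (fuel = n - i + 1 suffices). *)
Fixpoint e_aux (g : nat -> R) (n fuel i : nat) : R :=
  match fuel with
  | 0 => 0
  | fuel'.+1 =>
      if i == n then 1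
      else if i == n.-1 then g 1%N
      else \sum_(i.+1 <= j < n) e_aux g n fuel' j * g (j - i)%N + g (n - i)%N
  end.
Definition e_coef (g : nat -> R) (n i : nat) : R := e_aux g n (n - i).+1 i.

(* mean of a pmf f on {1,2,...} (f 0 = 0), as an extended real *)
Definition emean (f : nat -> R) : \bar R := esum_from 0 (fun n => n%:R * f n).

Definition tauE (a b : nat) (p : nat -> nat -> nat -> R) (Q : nat -> nat -> R)
  : \bar R :=
  (esum_from 0 (fun m => (\sum_(a <= r < b.+1) p m r 1%N)%R)
   + esum_from 0 (fun m => Q m 1%N))%E.

(* p^+_{n,r} and Q^+_n (the n = 0 case is the n >= 1 formula with empty sum) *)
Definition pplus_r (lam tau : R) (g : nat -> R) (p : nat -> nat -> nat -> R)
  (n r : nat) : R :=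
  tau^-1 * ((1 - lam) * p n r 1%N
            + lam * \sum_(1 <= i < n.+1) g i * p (n - i)%N r 1%N).
Definition pplus (a b : nat) (lam tau : R) (g : nat -> R)
  (p : nat -> nat -> nat -> R) (n : nat) : R :=
  \sum_(a <= r < b.+1) pplus_r lam tau g p n r.
Definition Qplus (lam tau : R) (g : nat -> R) (Q : nat -> nat -> R) (n : nat) : R :=
  tau^-1 * ((1 - lam) * Q n 1%N
            + lam * \sum_(1 <= i < n.+1) g i * Q (n - i)%N 1%N).

(* omega, with smean r = s_r (mean service time of a batch of size r),
   EV = E(V), delta in {0,1}. *)
Definition omegaE (a b : nat) (lam delta tau EV : R) (g : nat -> R)
  (smean : nat -> R) (p : nat -> nat -> nat -> R) (Q : nat -> nat -> R)
  : \bar R :=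
  let pp := pplus a b lam tau g p in
  let qp := Qplus lam tau g Q in
  ((\sum_(0 <= n < a)
      ((pp n * EV + delta * qp n * EV)%R%:E
       + ((1 - delta) * qp n)%R%:E *
         \sum_(n <= j < a)
           ((e_coef g j n)%:E *
            ((\sum_(a <= i < b.+1) g (i - j)%N * smean i)%R%:E
             + esum_from (b.+1 - j)%N (fun i => (g i * smean b)%R)))))
   + (\sum_(a <= n < b.+1) (pp n + qp n) * smean n)%R%:E
   + esum_from b.+1 (fun n => ((pp n + qp n) * smean b)%R))%E.

End Defs.

(* Sum the balance equations over the number of waiting customers. The arrival
   operator preserves total mass, so for each batch size r the marginal
   P_r(u) = sum_n p_{n,r}(u) satisfies the renewal recursion
   P_r(u) = P_r(u+1) + s_r(u) A_r, and likewise sum_n Q_n(u) with v_u and an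
   input B. A nonnegative summable solution of such a recursion is A times the
   tail of the pmf, hence P_r(1) = A_r and sum_u P_r(u) = A_r s_r. Therefore
   tau = sum_r A_r + B, while (N) becomes 1 - c = sum_r A_r s_r + B E(V), where
   c is the dormant mass. It remains to see that tau * omega = sum_r A_r s_r + B E(V):
   the inputs A_r and B are sums of the numerators of p^+_n and Q^+_n, except for
   the wake-ups of a dormant server; for single vacations (E1)-(E2) form a renewal
   equation whose solution lam p_{j,0} = sum_n e_{j,n} tau Q^+_n turns the wake-up
   terms into the e_{j,n} part of omega. *)

From mathcomp Require Import all_boot all_order all_algebra.
From mathcomp Require Import all_classical all_reals all_analysis.
From mathcomp Require Import ring zify.
Set Implicit Arguments. Unset Strict Implicit. Unset Printing Implicit Defensive.
Import Order.TTheory GRing.Theory Num.Theory.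
Local Open Scope ring_scope.

Section extended_series.
Variable R : realType.
Local Open Scope ereal_scope.

Lemma eseries_finite_support (f : nat -> \bar R) m n : (m <= n)%N ->
  (forall i, (n <= i)%N -> f i = 0) ->
  \sum_(m <= i <oo) f i = \sum_(m <= i < n) f i.
Proof.
move=> mn f0; apply: lim_near_cst => //; near=> N.
have nN : (n <= N)%N by near: N; exists n.
rewrite (@big_cat_nat _ _ _ n) //= [X in _ + X]big1_seq ?adde0 //.
by move=> i /andP[_]; rewrite mem_index_iota => /andP[+ _]; exact: f0.
Unshelve. all: by end_near. Qed.

Lemma eq_eseries_from (f h : nat -> \bar R) N :
  (forall i, (N <= i)%N -> f i = h i) ->
  \sum_(N <= i <oo) f i = \sum_(N <= i <oo) h i.
Proof.
by move=> fh; apply/congr_lim/funext => n; apply: eq_big_nat => i /andP[/fh].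
Qed.

Lemma nneseries_interchange_from (f : nat -> nat -> \bar R) k :
  (forall i j, (k <= j)%N -> 0 <= f i j) ->
  \sum_(0 <= i <oo) \sum_(k <= j <oo) f i j =
  \sum_(k <= j <oo) \sum_(0 <= i <oo) f i j.
Proof.
move=> f0; pose h i j := if (k <= j)%N then f i j else 0.
have h0 i j : 0 <= h i j by rewrite /h; case: ifPn => // /f0.
transitivity (\sum_(0 <= i <oo) \sum_(0 <= j <oo) h i j).
  by apply: eq_eseriesr => i _; rewrite ereal_series eseries_mkcond.
rewrite (@nneseries_interchange R h xpredT xpredT) //.
rewrite [RHS]ereal_series [RHS]eseries_mkcond.
by apply: eq_eseriesr => j _; rewrite /h; case: ifPn => // _; rewrite eseries0.
Qed.

Lemma nneseries_sum_nat_in (f : nat -> nat -> \bar R) m n N :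
  (forall i j, (m <= i < n)%N -> 0 <= f i j) ->
  \sum_(N <= j <oo) \sum_(m <= i < n) f i j =
  \sum_(m <= i < n) \sum_(N <= j <oo) f i j.
Proof.
move=> f0; rewrite [RHS]big_nat_cond -nneseries_sum; last first.
  by move=> i j /andP[/f0].
by apply: eq_eseriesr => j _; rewrite big_nat_cond.
Qed.

Lemma lee_nneseries_term (f : nat -> \bar R) m k :
  (forall i, (m <= i)%N -> 0 <= f i) -> (m <= k)%N ->
  f k <= \sum_(m <= i <oo) f i.
Proof.
move=> f0 mk; apply: le_trans (nneseries_lim_ge (P := xpredT) k.+1 _); last first.
  by move=> n mn _; exact: f0.
rewrite big_nat_recr //= leeDr // big_nat_cond; apply: sume_ge0.
by move=> i /andP[/andP[mi _] _]; exact: f0.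
Qed.

End extended_series.

Section real_series.
Variable R : realType.
Implicit Types (f s : nat -> R) (k m : nat).
Local Open Scope ereal_scope.

Lemma esum_from_ge0 m f : (forall n, (m <= n)%N -> (0 <= f n)%R) ->
  0 <= esum_from m f.
Proof. by move=> f0; apply: nneseries_ge0 => n mn _; rewrite lee_fin f0. Qed.

Lemma esum_from_recl k f : (forall n, (k <= n)%N -> (0 <= f n)%R) ->
  esum_from k f = (f k)%:E + esum_from k.+1 f.
Proof.
move=> f0; rewrite /esum_from (nneseries_split k 1); last first.
  by move=> i ki; rewrite lee_fin f0.
by rewrite addn1 big_nat1.
Qed.

Lemma esum_fromZl k f (c : R) : (forall n, (0 <= f n)%R) ->
  esum_from k (fun i => c * f i)%R = c%:E * esum_from k f.
Proof.
move=> f0; rewrite /esum_from -nneseriesZl; last by move=> i _; rewrite lee_fin.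
by apply: eq_eseriesr => i _; rewrite EFinM.
Qed.

Lemma esum_fromZr k f (c : R) : (forall n, (0 <= f n)%R) ->
  esum_from k (fun i => f i * c)%R = c%:E * esum_from k f.
Proof.
move=> f0; rewrite -esum_fromZl //.
by congr esum_from; apply/funext => i; rewrite mulrC.
Qed.

Lemma esum_from_fin_num k f : (forall n, (0 <= f n)%R) ->
  esum_from 0 f < +oo -> esum_from k f \is a fin_num.
Proof.
move=> f0 fin; rewrite ge0_fin_numE; last exact: esum_from_ge0.
apply: le_lt_trans fin; rewrite /esum_from (nneseries_split 0 k); last first.
  by move=> i _; rewrite lee_fin.
by rewrite leeDr // sume_ge0 // => i _; rewrite lee_fin.
Qed.

Lemma esum_from_pinfty f (e : R) : (0 < e)%R ->
  (forall u, (1 <= u)%N -> (e <= f u)%R) -> esum_from 1 f = +oo.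
Proof.
move=> e0 fe.
have f0 u : (1 <= u)%N -> (0 <= f u)%R by move=> u1; exact: le_trans (ltW e0) (fe u u1).
have ge N : (N%:R * e)%:E <= esum_from 1 f.
  apply: le_trans (nneseries_lim_ge (P := xpredT) N.+1 _); last first.
    by move=> n n1 _; rewrite lee_fin f0.
  rewrite sumEFin lee_fin.
  have -> : (N%:R * e = \sum_(1 <= i < N.+1) e)%R.
    by rewrite sumr_const_nat subn1 mulr_natl.
  by apply: ler_sum_nat => i /andP[i1 _]; exact: fe.
case E: (esum_from 1 f) (esum_from_ge0 f0) => [x| |] // x0.
have := ge (Num.truncn (x / e)).+1; rewrite E lee_fin.
have := truncnS_gt (x / e); rewrite ltr_pdivrMr // => lt_x.
by move=> /(lt_le_trans lt_x); rewrite ltxx.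
Qed.

Lemma pmf_mean_ge1 s : s 0%N = 0%R -> (forall n, (0 <= s n)%R) ->
  esum_from 0 s = 1 -> emean s < +oo -> (1 <= fine (emean s))%R.
Proof.
move=> s0 s_ge0 s1 smean.
have : esum_from 0 s <= emean s.
  apply: lee_nneseries => [i _ _|[|n] _]; rewrite lee_fin //; first by rewrite s0 mulr0.
  by rewrite ler_peMl // ler1n.
rewrite s1 => mean_ge1; rewrite -lee_fin fineK //.
by rewrite ge0_fin_numE // (le_trans _ mean_ge1).
Qed.

Lemma pmf_exists_gt0 s : s 0%N = 0%R -> (forall n, (0 <= s n)%R) ->
  esum_from 0 s = 1 -> exists2 u, (1 <= u)%N & (0 < s u)%R.
Proof.
move=> s0 s_ge0 s1; apply: contrapT => s_le0.
suff : esum_from 0 s = 0 by rewrite s1 => /eqP; rewrite onee_eq0.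
rewrite /esum_from eseries0 // => -[|i] _ _; first by rewrite s0.
apply/eqP; rewrite eqe eq_le s_ge0 andbT leNgt.
by apply/negP => si; apply: s_le0; exists i.+1.
Qed.

End real_series.

(* Law of the number of waiting customers after one slot of compound Bernoulli
   arrivals, started from [X]. *)
Definition arrivals (R : realType) (lam : R) (g X : nat -> R) (n : nat) : R :=
  (1 - lam) * X n + lam * \sum_(1 <= i < n.+1) g i * X (n - i)%N.

Section arrivals.
Variables (R : realType) (lam : R) (g : nat -> R).
Implicit Types (X : nat -> R).

Lemma arrivals0 X : arrivals lam g X 0 = (1 - lam) * X 0%N.
Proof. by rewrite /arrivals big_geq // mulr0 addr0. Qed.

Lemma arrivalsD X Y n :
  arrivals lam g (fun k => X k + Y k) n = arrivals lam g X n + arrivals lam g Y n.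
Proof.
rewrite /arrivals (eq_bigr (fun i => g i * X (n - i)%N + g i * Y (n - i)%N)).
  by rewrite big_split /=; ring.
by move=> i _; rewrite mulrDr.
Qed.

Lemma arrivalsZ c X n :
  arrivals lam g (fun k => c * X k) n = c * arrivals lam g X n.
Proof.
rewrite /arrivals (eq_bigr (fun i => c * (g i * X (n - i)%N))).
  by rewrite -mulr_sumr; ring.
by move=> i _; rewrite mulrCA.
Qed.

Lemma arrivals_sum (I : Type) (r : seq I) (X : I -> nat -> R) n :
  arrivals lam g (fun k => \sum_(i <- r) X i k) n =
  \sum_(i <- r) arrivals lam g (X i) n.
Proof.
elim: r => [|i r IH].
  rewrite big_nil /arrivals big_nil mulr0 add0r big1 ?mulr0 // => j _.
  by rewrite big_nil mulr0.
have -> : (fun k => \sum_(j <- i :: r) X j k) = (fun k => X i k + \sum_(j <- r) X j k).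
  by apply/funext => k; rewrite big_cons.
by rewrite arrivalsD IH big_cons.
Qed.

Hypotheses (lam_ge0 : 0 <= lam) (lam_le1 : lam <= 1).
Hypothesis g_ge0 : forall m, 0 <= g m.

Lemma arrivals_ge0 X n : (forall k, 0 <= X k) -> 0 <= arrivals lam g X n.
Proof.
move=> X_ge0; rewrite /arrivals addr_ge0 ?mulr_ge0 ?subr_ge0 //.
by rewrite sumr_ge0 // => i _; rewrite mulr_ge0.
Qed.

Hypotheses (g0 : g 0%N = 0) (g1 : esum_from 0 g = 1%E).

Lemma esum_convolution X : (forall n, 0 <= X n) -> (esum_from 0 X < +oo)%E ->
  esum_from 0 (fun n => \sum_(1 <= i < n.+1) g i * X (n - i)%N) = esum_from 0 X.
Proof.
move=> X_ge0 X_fin.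
have SX_fin : esum_from 0 X \is a fin_num by rewrite ge0_fin_numE ?esum_from_ge0.
transitivity (\sum_(0 <= n <oo) \sum_(0 <= i <oo)
   (if (i <= n)%N then (g i * X (n - i)%N)%:E else 0))%E.
  apply: eq_eseriesr => n _.
  rewrite (@eseries_finite_support _ _ 0 n.+1) //; last first.
    by move=> i; rewrite ltnNge => /negbTE ->.
  rewrite -sumEFin [in RHS]big_ltn // leq0n g0 mul0r add0e.
  by apply: eq_big_nat => i /andP[_]; rewrite ltnS => ->.
rewrite (@nneseries_interchange R _ xpredT xpredT); last first.
  by move=> i j; case: ifPn => // _; rewrite lee_fin mulr_ge0.
transitivity (\sum_(0 <= i <oo) (fine (esum_from 0 X) * g i)%:E)%E.
  apply: eq_eseriesr => i _.
  rewrite -(@eseries_mkcond _ (fun n => (i <= n)%N)) -ereal_series.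
  rewrite -nneseries_addn; last by move=> n; rewrite lee_fin mulr_ge0.
  under eq_eseriesr do rewrite addnK.
  have := esum_fromZl 0 (g i) X_ge0; rewrite /esum_from => ->.
  by rewrite -/(esum_from 0 X) -{1}(fineK SX_fin) -EFinM mulrC.
have := esum_fromZl 0 (fine (esum_from 0 X)) g_ge0.
by rewrite g1 mule1 fineK // /esum_from => ->.
Qed.

Lemma esum_arrivals X : (forall n, 0 <= X n) -> (esum_from 0 X < +oo)%E ->
  esum_from 0 (arrivals lam g X) = esum_from 0 X.
Proof.
move=> X_ge0 X_fin.
have SX_fin : esum_from 0 X \is a fin_num by rewrite ge0_fin_numE ?esum_from_ge0.
have conv_ge0 n : 0 <= \sum_(1 <= i < n.+1) g i * X (n - i)%N.
  by rewrite sumr_ge0 // => i _; rewrite mulr_ge0.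
rewrite /esum_from /arrivals; under eq_eseriesr do rewrite EFinD.
rewrite nneseriesD; last 2 first.
- by move=> i _ _; rewrite lee_fin mulr_ge0 // subr_ge0.
- by move=> i _ _; rewrite lee_fin mulr_ge0.
rewrite -!/(esum_from 0 _) !esum_fromZl ?subr_ge0 // esum_convolution //.
by rewrite -(fineK SX_fin) -!EFinM -EFinD; congr (_%:E); ring.
Qed.

End arrivals.

Section renewal.
Variables (R : realType) (s : nat -> R).
Hypotheses (s_ge0 : forall n, 0 <= s n) (s1 : esum_from 0 s = 1%E).
Hypothesis s_mean : (emean s < +oo)%E.

Let tail u := fine (esum_from u s).

Let tail_fin u : esum_from u s \is a fin_num.
Proof. by apply: esum_from_fin_num => //; rewrite s1 ltry. Qed.

Let tail_ge0 u : 0 <= tail u.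
Proof. by rewrite /tail fine_ge0 // esum_from_ge0. Qed.

Let tailS u : tail u = s u + tail u.+1.
Proof. by apply: EFin_inj; rewrite EFinD /tail !fineK // esum_from_recl. Qed.

Lemma esum_tail_mean : esum_from 1 tail = emean s.
Proof.
transitivity (\sum_(1 <= u <oo) \sum_(0 <= k <oo)
    (if (u <= k)%N then (s k)%:E else 0))%E.
  by apply: eq_eseriesr => u _; rewrite fineK // /esum_from ereal_series eseries_mkcond.
rewrite -nneseries_interchange_from; last by move=> i j _; case: ifP; rewrite ?lee_fin.
apply: eq_eseriesr => k _.
rewrite (@eseries_finite_support _ _ 1 k.+1) //; last first.
  by move=> i; rewrite ltnNge => /negbTE ->.
rewrite (@eq_big_nat _ _ _ 1 k.+1 _ (fun=> (s k)%:E)); last first.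
  by move=> i /andP[_]; rewrite ltnS => ->.
by rewrite sumEFin sumr_const_nat subn1 mulr_natl.
Qed.

(* [P u - A * tail u] does not depend on [u]; as [P] and [tail] are summable,
   this constant is 0. *)
Lemma renewal_solution (P : nat -> R) (A : R) :
  (forall u, (1 <= u)%N -> 0 <= P u) -> (esum_from 1 P < +oo)%E ->
  (forall u, (1 <= u)%N -> P u = P u.+1 + s u * A) ->
  forall u, (1 <= u)%N -> P u = A * tail u.
Proof.
move=> P_ge0 P_fin P_rec.
pose c u := P u - A * tail u.
have c_const u : (1 <= u)%N -> c u = c 1%N.
  elim: u => // u IH; rewrite ltnS leq_eqVlt => /orP[/eqP <- //|u1].
  by rewrite -IH // /c (P_rec u u1) (tailS u); ring.
suff c1 : c 1%N = 0.
  by move=> u u1; have := c_const u u1; rewrite c1 /c => /eqP; rewrite subr_eq0 => /eqP.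
apply/eqP; apply: contraT => c1_neq0.
have : esum_from 1 (fun u => P u + `|A| * tail u) = +oo%E.
  apply: (@esum_from_pinfty _ _ `|c 1%N|); first by rewrite normr_gt0.
  move=> u u1; rewrite -(c_const u u1) (le_trans (ler_normB _ _)) //.
  by rewrite normrM (ger0_norm (P_ge0 u u1)) (ger0_norm (tail_ge0 u)).
rewrite /esum_from; under eq_eseriesr do rewrite EFinD.
rewrite nneseriesD; last 2 first.
- by move=> u u1 _; rewrite lee_fin P_ge0.
- by move=> u _ _; rewrite lee_fin mulr_ge0.
rewrite -!/(esum_from 1 _) esum_fromZl // esum_tail_mean => sum_oo.
have : (esum_from 1 P + `|A|%:E * emean s < +oo)%E.
  by rewrite lte_add_pinfty // lte_mul_pinfty.
by rewrite sum_oo ltxx.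
Qed.

End renewal.

Section level_renewal.
Variables (R : realType) (lam : R) (g s I : nat -> R) (X : nat -> nat -> R).
Hypotheses (lam_ge0 : 0 <= lam) (lam_le1 : lam <= 1).
Hypotheses (g0 : g 0%N = 0) (g_ge0 : forall m, 0 <= g m) (g1 : esum_from 0 g = 1%E).
Hypotheses (s0 : s 0%N = 0) (s_ge0 : forall n, 0 <= s n) (s1 : esum_from 0 s = 1%E).
Hypothesis s_mean : (emean s < +oo)%E.
Hypotheses (I_ge0 : forall n, 0 <= I n) (X_ge0 : forall n u, (1 <= u)%N -> 0 <= X n u).
Hypothesis X_fin : (\sum_(0 <= n <oo) \sum_(1 <= u <oo) (X n u)%:E < +oo)%E.
Hypothesis X_eq : forall n u, (1 <= u)%N ->
  X n u = arrivals lam g (X ^~ u.+1) n + s u * I n.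

Let level_fin u : (1 <= u)%N -> esum_from 0 (X ^~ u) \is a fin_num.
Proof.
move=> u1; rewrite ge0_fin_numE ?esum_from_ge0 // => [|n _]; last exact: X_ge0.
apply: le_lt_trans X_fin; apply: lee_nneseries => [n _ _|n _].
  by rewrite lee_fin X_ge0.
by apply: (@lee_nneseries_term _ (fun u => (X n u)%:E)) => // i i1; rewrite lee_fin X_ge0.
Qed.

Let level_balance u : (1 <= u)%N ->
  esum_from 0 (X ^~ u) = (esum_from 0 (X ^~ u.+1) + (s u)%:E * esum_from 0 I)%E.
Proof.
move=> u1; rewrite /esum_from (eq_eseriesr (fun n _ => congr1 EFin (X_eq n u1))).
under eq_eseriesr do rewrite EFinD.
rewrite nneseriesD; last 2 first.
- by move=> n _ _; rewrite lee_fin arrivals_ge0 // => k; rewrite X_ge0.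
- by move=> n _ _; rewrite lee_fin mulr_ge0.
have Xu_ge0 n : 0 <= X n u.+1 by exact: X_ge0.
have Xu_fin : (esum_from 0 (X ^~ u.+1) < +oo)%E by rewrite ltey_eq level_fin.
by rewrite -!/(esum_from 0 _) esum_arrivals ?esum_fromZl.
Qed.

Let input_fin : esum_from 0 I \is a fin_num.
Proof.
have [u u1 su_gt0] := pmf_exists_gt0 s0 s_ge0 s1.
rewrite ge0_fin_numE ?esum_from_ge0 // ltNge leye_eq; apply/negP => /eqP I_oo.
have := level_fin u1; rewrite level_balance // I_oo gt0_muley ?lte_fin //.
by rewrite addey // -ltNye (lt_le_trans _ (esum_from_ge0 _)) // => n _; exact: X_ge0.
Qed.

Let total_level :
  (\sum_(0 <= n <oo) \sum_(1 <= u <oo) (X n u)%:E =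
   esum_from 1 (fun u => fine (esum_from 0 (X ^~ u))))%E.
Proof.
rewrite nneseries_interchange_from; last by move=> n u u1; rewrite lee_fin X_ge0.
by apply: eq_eseries_from => u u1; rewrite fineK ?level_fin.
Qed.

Lemma level_renewal :
  [/\ esum_from 0 I \is a fin_num, esum_from 0 (X ^~ 1%N) = esum_from 0 I
    & (\sum_(0 <= n <oo) \sum_(1 <= u <oo) (X n u)%:E = esum_from 0 I * emean s)%E].
Proof.
pose A := fine (esum_from 0 I).
have level_sol : forall u, (1 <= u)%N ->
    fine (esum_from 0 (X ^~ u)) = A * fine (esum_from u s).
  apply: (@renewal_solution R s s_ge0 s1 s_mean).
  - by move=> u u1; rewrite fine_ge0 ?esum_from_ge0 // => n _; exact: X_ge0.
  - by rewrite -total_level.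
  - move=> u u1; apply: EFin_inj.
    by rewrite EFinD EFinM !fineK ?level_fin //; exact: level_balance.
split => //.
  have tail1 : esum_from 1 s = 1%E by rewrite -s1 [RHS]esum_from_recl // s0 add0e.
  by rewrite -(fineK (level_fin (leqnn 1))) level_sol // tail1 mulr1 fineK.
rewrite total_level /esum_from.
rewrite (eq_eseries_from (h := fun u => (A * fine (esum_from u s))%:E)); last first.
  by move=> u u1; rewrite level_sol.
rewrite -/(esum_from 1 _) esum_fromZl ?esum_tail_mean ?fineK //.
by move=> u; rewrite fine_ge0 ?esum_from_ge0.
Qed.

End level_renewal.

Section triangular_sums.
Variable R : realType.

Lemma exchange_big_nat_addle (F : nat -> nat -> R) j :
  \sum_(1 <= i < j.+1) \sum_(0 <= n < (j - i).+1) F i n =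
  \sum_(0 <= n < j) \sum_(1 <= i < (j - n).+1) F i n.
Proof.
transitivity (\sum_(1 <= i < j.+1) \sum_(0 <= n < j)
   (if (i + n <= j)%N then F i n else 0)).
  apply: eq_big_nat => i /andP[i1 ij].
  rewrite (@big_nat_widen _ _ _ 0 (j - i).+1 j); last by lia.
  rewrite big_mkcondr; apply: eq_bigr => n _.
  by have -> : (n < (j - i).+1)%N = (i + n <= j)%N by apply/idP/idP; lia.
rewrite exchange_big_nat; apply: eq_big_nat => n /andP[_ nj].
rewrite [RHS](@big_nat_widen _ _ _ 1 (j - n).+1 j.+1); last by lia.
rewrite big_mkcondr; apply: eq_bigr => i _.
by have -> : (i < (j - n).+1)%N = (i + n <= j)%N by apply/idP/idP; lia.
Qed.

Lemma exchange_big_nat_le (H : nat -> nat -> R) a :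
  \sum_(0 <= n < a) \sum_(n <= j < a) H n j =
  \sum_(0 <= j < a) \sum_(0 <= n < j.+1) H n j.
Proof.
transitivity (\sum_(0 <= n < a) \sum_(0 <= j < a)
   (if (n <= j)%N then H n j else 0)).
  by apply: eq_big_nat => n _; rewrite (@big_nat_widenl _ _ _ n 0) // big_mkcondr.
rewrite exchange_big_nat; apply: eq_big_nat => j /andP[_ ja].
rewrite [RHS](@big_nat_widen _ _ _ 0 j.+1 a) //.
by rewrite big_mkcondr; apply: eq_bigr => n _; rewrite ltnS.
Qed.

End triangular_sums.

Section e_coef.
Variables (R : realType) (g : nat -> R).

Lemma e_aux_enough_fuel n k i f : (i <= n)%N -> (n - i <= k)%N ->
  ((n - i).+1 <= f)%N -> e_aux g n f i = e_coef g n i.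
Proof.
rewrite /e_coef; elim: k i f => [|k IH] i f ilen nik nif.
  have -> : i = n by lia.
  by case: f nif => // f _; rewrite subnn /= eqxx.
case: f nif => // f nif /=.
case: ifP => // /negbT ni; case: ifP => // _.
congr (_ + _); apply: eq_big_nat => j /andP[ij jn].
by rewrite (IH j f) ?(IH j (n - i)%N) //; lia.
Qed.

Let e_auxS n f i : e_aux g n f.+1 i =
  if i == n then 1 else if i == n.-1 then g 1%N
  else \sum_(i.+1 <= j < n) e_aux g n f j * g (j - i)%N + g (n - i)%N.
Proof. by []. Qed.

Lemma e_coef_diag n : e_coef g n n = 1.
Proof. by rewrite /e_coef subnn /= eqxx. Qed.

Lemma e_coef_recr n i : (i < n)%N ->
  e_coef g n i = \sum_(i.+1 <= j < n.+1) e_coef g n j * g (j - i)%N.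
Proof.
move=> ilt; rewrite big_nat_recr /=; last by lia.
rewrite e_coef_diag mul1r {1}/e_coef.
have -> : (n - i).+1 = (n - i).-1.+2 by lia.
rewrite e_auxS (_ : (i == n) = false); last by apply/eqP; lia.
case: ifP => [/eqP ->|/negbT ni1].
  by rewrite big_geq ?add0r; [congr g; lia | lia].
congr (_ + _); apply: eq_big_nat => j /andP[ij jn].
by rewrite (@e_aux_enough_fuel n (n - j)%N j) //; lia.
Qed.

Lemma e_coef_shift n i : (i <= n)%N -> e_coef g n i = e_coef g (n - i) 0.
Proof.
suff shift k : forall n i, (n - i <= k)%N -> (i <= n)%N ->
    e_coef g n i = e_coef g (n - i) 0 by exact: shift.
elim: k => [|k IH] {}n {}i nik ilen.
  have -> : i = n by lia.
  by rewrite subnn !e_coef_diag.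
have [->|ilt] := eqVneq i n; first by rewrite subnn !e_coef_diag.
have {}ilt : (i < n)%N by lia.
rewrite e_coef_recr // (@e_coef_recr (n - i)%N 0%N); last by lia.
rewrite -(add1n i) big_addn.
have -> : (n.+1 - i = (n - i).+1)%N by lia.
apply: eq_big_nat => j /andP[j1 jn].
rewrite (IH n (j + i)%N); try lia.
rewrite (IH (n - i)%N j); try lia.
by congr (e_coef g _ _ * g _); lia.
Qed.

Lemma e_coef_recl n i : (i < n)%N ->
  e_coef g n i = \sum_(1 <= d < (n - i).+1) g d * e_coef g (n - d)%N i.
Proof.
move=> ilt; rewrite e_coef_shift; last exact: ltnW.
rewrite e_coef_recr; last by lia.
rewrite -(add1n 0) big_addn subn0.
apply: eq_big_nat => d /andP[_ dn].
rewrite addn0 mulrC subn0 e_coef_shift; last by lia.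
rewrite [in RHS]e_coef_shift; last by lia.
by congr (_ * e_coef g _ _); lia.
Qed.

Lemma e_coef_solve (y q : nat -> R) a :
  (forall j, (j < a)%N -> y j = \sum_(1 <= i < j.+1) g i * y (j - i)%N + q j) ->
  forall j, (j < a)%N -> y j = \sum_(0 <= n < j.+1) e_coef g j n * q n.
Proof.
move=> y_eq j; elim: j {-2}j (leqnn j) => [|k IH] j jk ja.
  have j0 : j = 0%N by lia.
  by rewrite j0 y_eq -?j0 // big_geq // add0r big_nat1 e_coef_diag mul1r.
rewrite y_eq //.
have -> : \sum_(1 <= i < j.+1) g i * y (j - i)%N =
    \sum_(1 <= i < j.+1) \sum_(0 <= n < (j - i).+1) g i * e_coef g (j - i) n * q n.
  apply: eq_big_nat => i /andP[i1 ij].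
  rewrite (IH (j - i)%N) ?mulr_sumr; try lia.
  by apply: eq_bigr => n _; rewrite mulrA.
rewrite exchange_big_nat_addle big_nat_recr //= e_coef_diag mul1r; congr (_ + _).
apply: eq_big_nat => n /andP[_ nj].
by rewrite (e_coef_recl nj) mulr_suml.
Qed.

End e_coef.

Section queue.
Variables (R : realType) (a b : nat) (lam delta : R) (g p0 : nat -> R).
Variables (p : nat -> nat -> nat -> R) (Q : nat -> nat -> R).

(* [completion_mass n] and [vacation_end_mass n] are [tau * p^+_n] and [tau * Q^+_n];
   [wakeup_mass n] is the mass of slots in which a dormant server is woken up
   with [n] customers waiting. *)
Definition completion_mass n :=
  \sum_(a <= r < b.+1) arrivals lam g (fun k => p k r 1%N) n.
Definition vacation_end_mass n := arrivals lam g (fun k => Q k 1%N) n.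
Definition wakeup_mass n := (1 - delta) * lam * \sum_(0 <= i < a) g (n - i)%N * p0 i.
Definition decision_mass n := completion_mass n + vacation_end_mass n + wakeup_mass n.

(* The brackets of (E3)/(E5) and (E6)/(E7): a batch of size [r < b] leaves the
   queue empty, a batch of size [b] taken from [n + b] customers leaves [n]. *)
Definition service_input r n :=
  if (r < b)%N then (if n == 0%N then decision_mass r else 0) else decision_mass (n + b).
Definition vacation_input n :=
  if (n < a)%N then completion_mass n + delta * vacation_end_mass n else 0.

Hypotheses (lam_ge0 : 0 <= lam) (lam_le1 : lam <= 1).
Hypotheses (delta_ge0 : 0 <= delta) (delta_le1 : delta <= 1).
Hypotheses (g_ge0 : forall m, 0 <= g m) (g1 : esum_from 0 g = 1%E).
Hypothesis p0_ge0 : forall n, (n < a)%N -> 0 <= p0 n.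
Hypothesis p_ge0 : forall n r u, (a <= r <= b)%N -> (1 <= u)%N -> 0 <= p n r u.
Hypothesis Q_ge0 : forall n u, (1 <= u)%N -> 0 <= Q n u.

Lemma completion_mass_ge0 n : 0 <= completion_mass n.
Proof.
rewrite /completion_mass big_nat_cond sumr_ge0 // => r /andP[/andP[ar rb] _].
by rewrite arrivals_ge0 // => k; rewrite p_ge0 // ar -ltnS.
Qed.

Lemma vacation_end_mass_ge0 n : 0 <= vacation_end_mass n.
Proof. by rewrite arrivals_ge0 // => k; rewrite Q_ge0. Qed.

Lemma wakeup_mass_ge0 n : 0 <= wakeup_mass n.
Proof.
rewrite /wakeup_mass !mulr_ge0 ?subr_ge0 // big_nat_cond sumr_ge0 // => i.
by case/andP => /andP[_ ia] _; rewrite mulr_ge0 ?p0_ge0.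
Qed.

Lemma decision_mass_ge0 n : 0 <= decision_mass n.
Proof.
apply: addr_ge0; [apply: addr_ge0|].
- exact: completion_mass_ge0.
- exact: vacation_end_mass_ge0.
- exact: wakeup_mass_ge0.
Qed.

Lemma service_input_ge0 r n : 0 <= service_input r n.
Proof.
rewrite /service_input; case: (r < b)%N; first case: (n == 0%N).
all: by rewrite ?decision_mass_ge0.
Qed.

Lemma vacation_input_ge0 n : 0 <= vacation_input n.
Proof.
rewrite /vacation_input; case: ifP => // _.
by apply: addr_ge0; rewrite ?mulr_ge0 ?completion_mass_ge0 ?vacation_end_mass_ge0.
Qed.

Lemma vacation_input_arrivals n : (n < a)%N ->
  vacation_input n =
  arrivals lam g (fun k => \sum_(a <= m < b.+1) p k m 1%N + delta * Q k 1%N) n.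
Proof.
by move=> na; rewrite /vacation_input na arrivalsD arrivalsZ arrivals_sum.
Qed.

Lemma esum_service_input_lt r : (r < b)%N ->
  esum_from 0 (service_input r) = (decision_mass r)%:E.
Proof.
move=> rb; rewrite esum_from_recl; last by move=> n _; exact: service_input_ge0.
rewrite {1}/service_input rb eqxx /esum_from eseries0 ?adde0 // => -[|n] // _ _.
by rewrite /service_input rb.
Qed.

Lemma esum_wakeup_mass_shift k : (a <= k)%N ->
  esum_from 0 (fun n => wakeup_mass (n + k)) =
  ((1 - delta) * lam * \sum_(0 <= i < a) p0 i * fine (esum_from (k - i) g))%:E.
Proof.
move=> ak; have g_fin : (esum_from 0 g < +oo)%E by rewrite g1 ltry.
rewrite /wakeup_mass esum_fromZl; last first.
  move=> n; rewrite big_nat_cond sumr_ge0 // => i /andP[/andP[_ ia] _].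
  by rewrite mulr_ge0 ?p0_ge0.
rewrite [RHS]EFinM; congr (_ * _)%E.
rewrite /esum_from; under eq_eseriesr do rewrite -sumEFin.
rewrite nneseries_sum_nat_in; last first.
  by move=> i j /andP[_ ia]; rewrite lee_fin mulr_ge0 ?p0_ge0.
rewrite -sumEFin; apply: eq_big_nat => i /andP[_ ia].
rewrite (eq_eseriesr (g := fun n => (g (n + (k - i)) * p0 i)%:E)); last first.
  by move=> n _; rewrite addnBA //; lia.
rewrite -/(esum_from 0 _) esum_fromZr // /esum_from.
rewrite (@nneseries_addn R (fun n => (g n)%:E) (k - i)); last by move=> n; rewrite lee_fin.
rewrite -/(esum_from _ g) -(fineK (esum_from_fin_num (k - i) g_ge0 g_fin)).
by rewrite -EFinM mulrC.
Qed.

Lemma esum_service_input_b : (a <= b)%N ->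
  esum_from 0 (service_input b) =
  ((completion_mass b + vacation_end_mass b
    + (1 - delta) * lam
      * \sum_(0 <= i < a) p0 i * (g (b - i)%N + fine (esum_from (b.+1 - i) g)))%R%:E
   + esum_from b.+1 (fun n => completion_mass n + vacation_end_mass n)%R)%E.
Proof.
move=> ab; have g_fin : (esum_from 0 g < +oo)%E by rewrite g1 ltry.
have mass_ge0 n : 0 <= completion_mass n + vacation_end_mass n.
  by rewrite addr_ge0 ?completion_mass_ge0 ?vacation_end_mass_ge0.
transitivity (esum_from 0 (fun n => (completion_mass (n + b) + vacation_end_mass (n + b))
                                    + wakeup_mass (n + b))).
  by congr esum_from; apply/funext => n; rewrite /service_input ltnn.
rewrite /esum_from; under eq_eseriesr do rewrite EFinD.
rewrite nneseriesD; last 2 first.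
- by move=> n _ _; rewrite lee_fin.
- by move=> n _ _; rewrite lee_fin wakeup_mass_ge0.
rewrite -!/(esum_from 0 _) esum_wakeup_mass_shift // /esum_from.
rewrite (@nneseries_addn R (fun n => (completion_mass n + vacation_end_mass n)%:E) b);
  last by move=> n; rewrite lee_fin.
rewrite -/(esum_from b _) esum_from_recl //.
rewrite -addeA [(esum_from _ _ + _)%E]addeC addeA -EFinD.
congr ((_ + _ * _)%:E + _)%E; apply: eq_big_nat => i /andP[_ ia].
rewrite -/(esum_from (b - i) g) esum_from_recl // fineD ?esum_from_fin_num //=.
by rewrite subSn //; lia.
Qed.

Lemma esum_vacation_input : esum_from 0 vacation_input =
  (\sum_(0 <= n < a) (completion_mass n + delta * vacation_end_mass n))%:E.
Proof.
rewrite /esum_from (@eseries_finite_support _ _ 0 a) // => [|i ai]; last first.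
  by rewrite /vacation_input ltnNge ai.
rewrite sumEFin; congr (_%:E).
by apply: eq_big_nat => n /andP[_ na]; rewrite /vacation_input na.
Qed.

Definition wakeup_service (sm : nat -> R) j :=
  \sum_(a <= i < b.+1) g (i - j)%N * sm i + sm b * fine (esum_from (b.+1 - j) g).

Lemma omegaE_eq (tau EV : R) (sm : nat -> R) :
  let Z := esum_from b.+1 (fun n => completion_mass n + vacation_end_mass n) in
  Z \is a fin_num ->
  omegaE a b lam delta tau EV g sm p Q =
  (tau^-1 * (\sum_(0 <= n < a)
                ((completion_mass n + delta * vacation_end_mass n) * EV
                 + (1 - delta) * vacation_end_mass n
                   * \sum_(n <= j < a) e_coef g j n * wakeup_service sm j)
             + \sum_(a <= n < b.+1) (completion_mass n + vacation_end_mass n) * sm n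
             + fine Z * sm b))%:E.
Proof.
move=> Z Z_fin.
have pplusE n : pplus a b lam tau g p n = tau^-1 * completion_mass n.
  by rewrite /pplus /completion_mass mulr_sumr.
have QplusE n : Qplus lam tau g Q n = tau^-1 * vacation_end_mass n by [].
have tailE j : esum_from (b.+1 - j) (fun i => g i * sm b) =
               (sm b * fine (esum_from (b.+1 - j) g))%:E.
  by rewrite esum_fromZr // EFinM fineK // esum_from_fin_num // g1 ltry.
rewrite /omegaE; cbv zeta; rewrite !mulrDr [X in _ = X]EFinD [X in _ = (X + _)%E]EFinD.
congr (_ + _ + _)%E.
- rewrite mulr_sumr -sumEFin; apply: eq_bigr => n _.
  rewrite (eq_bigr (fun j => (e_coef g j n * wakeup_service sm j)%:E)); last first.
    by move=> j _; rewrite tailE -EFinD -EFinM.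
  by rewrite sumEFin -EFinM -EFinD pplusE QplusE; congr (_%:E); ring.
- by congr (_%:E); rewrite mulr_sumr; apply: eq_bigr => n _; rewrite pplusE QplusE; ring.
- have -> : (fun n => (pplus a b lam tau g p n + Qplus lam tau g Q n) * sm b) =
      (fun n => (completion_mass n + vacation_end_mass n) * (tau^-1 * sm b)).
    by apply/funext => n; rewrite pplusE QplusE; ring.
  rewrite esum_fromZr => [|n]; last first.
    by rewrite addr_ge0 ?completion_mass_ge0 ?vacation_end_mass_ge0.
  by rewrite -/Z -(fineK Z_fin) -EFinM; congr (_%:E); ring.
Qed.

Lemma wakeup_load (sm : nat -> R) : (a <= b)%N ->
  \sum_(a <= r < b) wakeup_mass r * sm r
  + ((1 - delta) * lam
     * \sum_(0 <= i < a) p0 i * (g (b - i)%N + fine (esum_from (b.+1 - i) g))) * sm b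
  = (1 - delta) * \sum_(0 <= j < a) lam * p0 j * wakeup_service sm j.
Proof.
move=> ab.
have -> : \sum_(a <= r < b) wakeup_mass r * sm r =
    \sum_(0 <= i < a) (1 - delta) * lam * p0 i * \sum_(a <= r < b) g (r - i)%N * sm r.
  rewrite [RHS](eq_bigr (fun i => \sum_(a <= r < b)
                   (1 - delta) * lam * p0 i * (g (r - i)%N * sm r))); last first.
    by move=> i _; rewrite mulr_sumr.
  rewrite exchange_big_nat /=; apply: eq_bigr => r _.
  by rewrite /wakeup_mass -mulrA mulr_suml mulr_sumr; apply: eq_bigr => i _; ring.
rewrite -mulrA mulr_suml mulr_sumr -big_split /= mulr_sumr.
apply: eq_bigr => i _; rewrite /wakeup_service big_nat_recr //=; ring.
Qed.

End queue.

Lemma EFin_eq_div (R : realType) (t x : R) (w : \bar R) :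
  0 <= t <= x -> (t = 0 -> x = 0) -> (t != 0 -> w = (t^-1 * x)%:E) ->
  t%:E = (x%:E / w)%E.
Proof.
move=> /andP[t_ge0 t_le_x] x0 wE.
have [t0|t_neq0] := eqVneq t 0; first by rewrite t0 (x0 t0) mul0e.
have x_gt0 : 0 < x by apply: lt_le_trans t_le_x; rewrite lt_def t_neq0.
rewrite wE // inver mulf_eq0 invr_eq0 (negbTE t_neq0) gt_eqF //= -EFinM.
by congr (_%:E); field; rewrite t_neq0 gt_eqF.
Qed.

Section stationary.
Variables (R : realType) (a b : nat) (lam delta : R).
Variables (g : nat -> R) (s : nat -> nat -> R) (v : nat -> R).
Variables (p0 : nat -> R) (p : nat -> nat -> nat -> R) (Q : nat -> nat -> R).
Hypotheses (a_gt0 : (1 <= a)%N) (a_le_b : (a <= b)%N).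
Hypotheses (lam_gt0 : 0 < lam) (lam_lt1 : lam < 1) (delta01 : delta = 0 \/ delta = 1).
Hypotheses (g0 : g 0%N = 0) (g_ge0 : forall m, 0 <= g m) (g1 : esum_from 0 g = 1%E).
Hypothesis s_pmf : forall r, (a <= r <= b)%N ->
  [/\ s r 0%N = 0, (forall n, 0 <= s r n), esum_from 0 (s r) = 1%E
    & (emean (s r) < +oo)%E].
Hypotheses (v0 : v 0%N = 0) (v_ge0 : forall n, 0 <= v n) (v1 : esum_from 0 v = 1%E).
Hypothesis v_mean : (emean v < +oo)%E.
Hypothesis p0_ge0 : forall n, (n < a)%N -> 0 <= p0 n.
Hypothesis p_ge0 : forall n r u, (a <= r <= b)%N -> (1 <= u)%N -> 0 <= p n r u.
Hypothesis Q_ge0 : forall n u, (1 <= u)%N -> 0 <= Q n u.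
Hypothesis E1 :
  p0 0%N = (1 - delta) * ((1 - lam) * p0 0%N + (1 - lam) * Q 0%N 1%N).
Hypothesis E2 : forall n, (1 <= n <= a - 1)%N ->
  p0 n = (1 - delta) * ((1 - lam) * p0 n
           + lam * \sum_(1 <= i < n.+1) g i * p0 (n - i)%N
           + (1 - lam) * Q n 1%N
           + lam * \sum_(1 <= i < n.+1) g i * Q (n - i)%N 1%N).
Hypothesis E3 : forall r u, (a <= r <= b)%N -> (1 <= u)%N ->
  p 0%N r u = (1 - lam) * p 0%N r u.+1
    + s r u * (\sum_(a <= m < b.+1)
                  ((1 - lam) * p r m 1%N
                   + lam * \sum_(1 <= i < r.+1) g i * p (r - i)%N m 1%N)
               + (1 - lam) * Q r 1%N
               + lam * \sum_(1 <= i < r.+1) g i * Q (r - i)%N 1%N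
               + (1 - delta) * lam * \sum_(0 <= i < a) g (r - i)%N * p0 i).
Hypothesis E4 : forall n r u, (1 <= n)%N -> (a <= r <= b - 1)%N -> (1 <= u)%N ->
  p n r u = (1 - lam) * p n r u.+1
    + lam * \sum_(1 <= i < n.+1) g i * p (n - i)%N r u.+1.
Hypothesis E5 : forall n u, (1 <= n)%N -> (1 <= u)%N ->
  p n b u = (1 - lam) * p n b u.+1
    + lam * \sum_(1 <= i < n.+1) g i * p (n - i)%N b u.+1
    + s b u * (\sum_(a <= m < b.+1)
                  ((1 - lam) * p (n + b)%N m 1%N
                   + lam * \sum_(1 <= i < (n + b).+1) g i * p (n + b - i)%N m 1%N)
               + (1 - lam) * Q (n + b)%N 1%N
               + lam * \sum_(1 <= i < (n + b).+1) g i * Q (n + b - i)%N 1%N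
               + (1 - delta) * lam * \sum_(0 <= i < a) g (n + b - i)%N * p0 i).
Hypothesis E6 : forall u, (1 <= u)%N ->
  Q 0%N u = (1 - lam) * Q 0%N u.+1
    + (1 - lam) * (\sum_(a <= m < b.+1) p 0%N m 1%N + delta * Q 0%N 1%N) * v u.
Hypothesis E7 : forall n u, (1 <= n <= a - 1)%N -> (1 <= u)%N ->
  Q n u = (1 - lam) * Q n u.+1
    + lam * \sum_(1 <= i < n.+1) g i * Q (n - i)%N u.+1
    + v u * ((1 - lam) * (\sum_(a <= m < b.+1) p n m 1%N + delta * Q n 1%N)
             + lam * \sum_(1 <= i < n.+1)
                       g i * (\sum_(a <= m < b.+1) p (n - i)%N m 1%N
                              + delta * Q (n - i)%N 1%N)).
Hypothesis E8 : forall n u, (a <= n)%N -> (1 <= u)%N ->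
  Q n u = (1 - lam) * Q n u.+1
    + lam * \sum_(1 <= i < n.+1) g i * Q (n - i)%N u.+1.
Hypothesis normalization :
  (((1 - delta) * \sum_(0 <= n < a) p0 n)%:E
   + \sum_(0 <= n <oo) \sum_(a <= r < b.+1) \sum_(1 <= u <oo) (p n r u)%:E
   + \sum_(0 <= n <oo) \sum_(1 <= u <oo) (Q n u)%:E = 1)%E.

Let lam_ge0 : 0 <= lam. Proof. exact: ltW. Qed.
Let lam_le1 : lam <= 1. Proof. exact: ltW. Qed.
Let delta_ge0 : 0 <= delta. Proof. by case: delta01 => ->. Qed.
Let delta_le1 : delta <= 1. Proof. by case: delta01 => ->. Qed.

Local Notation I_busy := (service_input a b lam delta g p0 p Q).
Local Notation I_vac := (vacation_input a b lam delta g p Q).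

Lemma service_level_eq r n u : (a <= r <= b)%N -> (1 <= u)%N ->
  p n r u = arrivals lam g (fun k => p k r u.+1) n + s r u * I_busy r n.
Proof.
move=> /andP[ar rb] u1; rewrite /service_input.
have [r_lt_b|r_ge_b] := ltnP r b; last have {rb r_ge_b} r_b : r = b by lia.
- case: n => [|n]; last by rewrite /= mulr0 addr0 E4 //; lia.
  by rewrite E3 ?ar ?(ltnW r_lt_b) // arrivals0 /decision_mass !addrA.
- subst r; case: n => [|n].
    by rewrite E3 ?ar ?leqnn // arrivals0 add0n /decision_mass !addrA.
  by rewrite E5 // /decision_mass !addrA.
Qed.

Lemma vacation_level_eq n u : (1 <= u)%N ->
  Q n u = arrivals lam g (fun k => Q k u.+1) n + v u * I_vac n.
Proof.
move=> u1; have [na|an] := ltnP n a; last first.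
  by rewrite /vacation_input ltnNge an mulr0 addr0 E8.
rewrite vacation_input_arrivals //; case: n na => [|n] na.
  by rewrite E6 // !arrivals0 /=; ring.
by rewrite E7 //; lia.
Qed.

Lemma wakeup_solution j : (j < a)%N ->
  (1 - delta) * (lam * p0 j) =
  (1 - delta) * \sum_(0 <= n < j.+1) e_coef g j n * vacation_end_mass lam g Q n.
Proof.
move: E1 E2; case: delta01 => ->; last by rewrite subrr !mul0r.
move=> E1' E2' ja; rewrite subr0 !mul1r; move: j ja.
apply: (e_coef_solve (y := fun j => lam * p0 j)) => j ja.
have -> : \sum_(1 <= i < j.+1) g i * (lam * p0 (j - i)%N) =
    lam * \sum_(1 <= i < j.+1) g i * p0 (j - i)%N.
  by rewrite mulr_sumr; apply: eq_bigr => i _; rewrite mulrCA.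
rewrite /vacation_end_mass (_ : lam * p0 j = p0 j - (1 - lam) * p0 j); last by ring.
case: j ja => [|j] ja; first by rewrite arrivals0 big_geq // {1}E1'; ring.
by rewrite {1}E2' /arrivals; [ring | lia].
Qed.

Lemma wakeup_load_vacation_ends (sm : nat -> R) :
  (1 - delta) * \sum_(0 <= j < a) lam * p0 j * wakeup_service a b g sm j =
  (1 - delta) * \sum_(0 <= n < a) vacation_end_mass lam g Q n
                  * \sum_(n <= j < a) e_coef g j n * wakeup_service a b g sm j.
Proof.
rewrite [in RHS](eq_bigr (fun n => \sum_(n <= j < a) vacation_end_mass lam g Q n
                  * (e_coef g j n * wakeup_service a b g sm j))); last first.
  by move=> n _; rewrite mulr_sumr.
rewrite exchange_big_nat_le !mulr_sumr; apply: eq_big_nat => j /andP[_ ja].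
rewrite (_ : _ * (_ * wakeup_service a b g sm j) =
             (1 - delta) * (lam * p0 j) * wakeup_service a b g sm j); last by ring.
rewrite wakeup_solution // -mulrA mulr_suml; congr (_ * _).
by apply: eq_bigr => n _; ring.
Qed.

Lemma omegaE_inputs (tau EV : R) (sm : nat -> R) :
  esum_from 0 (I_busy b) \is a fin_num ->
  omegaE a b lam delta tau EV g sm p Q =
  (tau^-1 * (\sum_(a <= r < b.+1) fine (esum_from 0 (I_busy r)) * sm r
             + fine (esum_from 0 I_vac) * EV))%:E.
Proof.
move=> Ib_fin.
set Z := esum_from b.+1 (fun n => completion_mass a b lam g p n + vacation_end_mass lam g Q n).
have Z_fin : Z \is a fin_num.
  by move: Ib_fin; rewrite esum_service_input_b // fin_numD => /andP[].
rewrite omegaE_eq //; congr ((_ * _)%:E).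
rewrite big_split /= -mulr_suml.
have -> : \sum_(0 <= n < a) (1 - delta) * vacation_end_mass lam g Q n
      * \sum_(n <= j < a) e_coef g j n * wakeup_service a b g sm j =
    (1 - delta) * \sum_(0 <= n < a) vacation_end_mass lam g Q n
      * \sum_(n <= j < a) e_coef g j n * wakeup_service a b g sm j.
  by rewrite mulr_sumr; apply: eq_bigr => n _; ring.
rewrite -wakeup_load_vacation_ends -wakeup_load //.
rewrite !big_nat_recr //= esum_service_input_b // fineD //= esum_vacation_input /=.
rewrite (@eq_big_nat _ _ _ a b (fun r => fine (esum_from 0 (I_busy r)) * sm r)
   (fun r => (completion_mass a b lam g p r + vacation_end_mass lam g Q r) * sm r
             + wakeup_mass a lam delta g p0 r * sm r)); last first.
  by move=> r /andP[_ rb]; rewrite esum_service_input_lt //= /decision_mass mulrDl.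
by rewrite !big_split /=; ring.
Qed.

Let busy_total r := (\sum_(0 <= n <oo) \sum_(1 <= u <oo) (p n r u)%:E)%E.
Let vacation_total := (\sum_(0 <= n <oo) \sum_(1 <= u <oo) (Q n u)%:E)%E.

Let busy_total_split :
  (\sum_(0 <= n <oo) \sum_(a <= r < b.+1) \sum_(1 <= u <oo) (p n r u)%:E =
   \sum_(a <= r < b.+1) busy_total r)%E.
Proof.
rewrite nneseries_sum_nat_in // => r n /andP[ar rb].
by apply: nneseries_ge0 => u u1 _; rewrite lee_fin p_ge0 // ar -ltnS.
Qed.

Let totals_fin :
  ((\sum_(a <= r < b.+1) busy_total r < +oo) /\ (vacation_total < +oo))%E.
Proof.
have c_ge0 : 0 <= (1 - delta) * \sum_(0 <= n < a) p0 n.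
  rewrite mulr_ge0 ?subr_ge0 // big_nat_cond sumr_ge0 // => n /andP[/andP[_ na] _].
  exact: p0_ge0.
have busy_ge0 : (0 <= \sum_(a <= r < b.+1) busy_total r)%E.
  rewrite big_nat_cond sume_ge0 // => r /andP[/andP[ar rb] _].
  apply: nneseries_ge0 => n _ _; apply: nneseries_ge0 => u u1 _.
  by rewrite lee_fin p_ge0 // ar -ltnS.
have vac_ge0 : (0 <= vacation_total)%E.
  by apply: nneseries_ge0 => n _ _; apply: nneseries_ge0 => u u1 _; rewrite lee_fin Q_ge0.
move: normalization; rewrite busy_total_split -/vacation_total => norm.
split; apply: (@le_lt_trans _ _ 1%E); rewrite ?ltry // -norm.
- by apply: lee_paddr => //; apply: lee_paddl; rewrite ?lee_fin.
- by rewrite leeDr // adde_ge0 // lee_fin.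
Qed.

Lemma service_renewal r : (a <= r <= b)%N ->
  [/\ esum_from 0 (I_busy r) \is a fin_num,
      esum_from 0 (fun n => p n r 1%N) = esum_from 0 (I_busy r)
    & busy_total r = (esum_from 0 (I_busy r) * emean (s r))%E].
Proof.
move=> rab; have [s0 s_ge0 s1 s_mean] := s_pmf rab.
have busy_ge0 r' : (a <= r' < b.+1)%N -> (0 <= busy_total r')%E.
  case/andP=> ar' rb'; apply: nneseries_ge0 => n _ _; apply: nneseries_ge0 => u u1 _.
  by rewrite lee_fin p_ge0 // ar' -ltnS.
have busy_fin : (busy_total r < +oo)%E.
  have [+ _] := totals_fin; rewrite -ge0_fin_numE; last first.
    by rewrite big_nat_cond sume_ge0 // => r' /andP[/busy_ge0].
  move/sum_fin_numP => /(_ r); rewrite mem_index_iota ltnS => /(_ rab isT) fin.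
  by rewrite ltey_eq fin.
apply: (@level_renewal R lam g (s r) (I_busy r) (fun n u => p n r u)) => //.
- exact: service_input_ge0.
- by move=> n u u1; exact: p_ge0.
- by move=> n u u1; exact: service_level_eq.
Qed.

Lemma vacation_renewal :
  [/\ esum_from 0 I_vac \is a fin_num,
      esum_from 0 (fun n => Q n 1%N) = esum_from 0 I_vac
    & vacation_total = (esum_from 0 I_vac * emean v)%E].
Proof.
have [_ vac_fin] := totals_fin.
apply: (@level_renewal R lam g v I_vac Q) => //.
- exact: vacation_input_ge0.
- exact: vacation_level_eq.
Qed.

Let A r := fine (esum_from 0 (I_busy r)).
Let B := fine (esum_from 0 I_vac).

Let A_E r : (a <= r <= b)%N -> (A r)%:E = esum_from 0 (I_busy r).
Proof. by move=> rab; rewrite fineK //; case: (service_renewal rab). Qed.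

Let B_E : B%:E = esum_from 0 I_vac.
Proof. by rewrite fineK //; case: vacation_renewal. Qed.

Lemma tauE_inputs : tauE a b p Q = (\sum_(a <= r < b.+1) A r + B)%:E.
Proof.
rewrite /tauE EFinD; congr (_ + _)%E; last by case: vacation_renewal => _ -> _.
rewrite /esum_from; under eq_eseriesr do rewrite -sumEFin.
rewrite nneseries_sum_nat_in; last first.
  by move=> r n /andP[ar rb]; rewrite lee_fin p_ge0 // ar -ltnS.
rewrite -sumEFin; apply: eq_big_nat => r rab; rewrite ltnS in rab.
by rewrite A_E //; case: (service_renewal rab).
Qed.

Lemma normalization_inputs :
  1 - (1 - delta) * \sum_(0 <= n < a) p0 n =
  \sum_(a <= r < b.+1) A r * fine (emean (s r)) + B * fine (emean v).
Proof.
have mean_fin (f : nat -> R) : f 0%N = 0 -> (forall n, 0 <= f n) ->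
    esum_from 0 f = 1%E -> (emean f < +oo)%E -> (fine (emean f))%:E = emean f.
  by move=> f0 f_ge0 f1 f_mean; rewrite fineK // ge0_fin_numE ?esum_from_ge0 // => n _;
    rewrite mulr_ge0.
have busy_sum : (\sum_(a <= r < b.+1) busy_total r =
                  (\sum_(a <= r < b.+1) A r * fine (emean (s r)))%:E)%E.
  rewrite -sumEFin; apply: eq_big_nat => r rab; rewrite ltnS in rab.
  have [s0 s_ge0 s1 s_mean] := s_pmf rab.
  by case: (service_renewal rab) => _ _ ->; rewrite -A_E // -mean_fin // -EFinM.
have := normalization; rewrite busy_total_split -/vacation_total busy_sum.
case: vacation_renewal => _ _ ->; rewrite -B_E -(mean_fin v) // -EFinM.
by rewrite -[X in X = _ -> _]EFinD => /(congr1 fine) /= {1}<-; ring.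
Qed.

Lemma tau_formula :
  let tau := fine (tauE a b p Q) in
  let EV := fine (emean v) in
  let smean := fun r => fine (emean (s r)) in
  tauE a b p Q
  = (((1 - (1 - delta) * \sum_(0 <= n < a) p0 n)%:E)
     / omegaE a b lam delta tau EV g smean p Q)%E.
Proof.
move=> tau EV smean.
have tau_E : tau = \sum_(a <= r < b.+1) A r + B by rewrite /tau tauE_inputs.
have A_ge0 r : 0 <= A r.
  by rewrite fine_ge0 // esum_from_ge0 // => n _; exact: service_input_ge0.
have B_ge0 : 0 <= B.
  by rewrite fine_ge0 // esum_from_ge0 // => n _; exact: vacation_input_ge0.
have sumA_ge0 : 0 <= \sum_(a <= r < b.+1) A r by rewrite sumr_ge0.
have smean_ge1 r : (a <= r < b.+1)%N -> 1 <= smean r.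
  by rewrite ltnS => rab; case: (s_pmf rab) => *; exact: pmf_mean_ge1.
have EV_ge1 : 1 <= EV by exact: pmf_mean_ge1.
rewrite tauE_inputs -tau_E normalization_inputs; apply: EFin_eq_div.
- rewrite tau_E addr_ge0 //= lerD ?ler_peMr //.
  by apply: ler_sum_nat => r rab; rewrite ler_peMr // smean_ge1.
- rewrite tau_E => /eqP; rewrite paddr_eq0 // => /andP[/eqP sumA0 /eqP ->].
  rewrite mul0r addr0 big1_seq // => r /andP[_]; rewrite mem_index_iota => rab.
  move/eqP: sumA0; rewrite psumr_eq0 // => /allP/(_ r).
  by rewrite mem_index_iota rab => /(_ isT)/eqP ->; rewrite mul0r.
- move=> tau_neq0; rewrite omegaE_inputs //.
  by have [] := @service_renewal b; rewrite ?a_le_b ?leqnn.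
Qed.

End stationary.

Theorem lemma2 (R : realType) (a b : nat) (lam delta : R)
  (g : nat -> R) (s : nat -> nat -> R) (v : nat -> R)
  (p0 : nat -> R) (p : nat -> nat -> nat -> R) (Q : nat -> nat -> R) :
  (1 <= a)%N -> (a <= b)%N ->
  0 < lam -> lam < 1 ->
  (delta = 0 \/ delta = 1) ->
  (* group-size distribution *)
  g 0%N = 0 -> (forall m, 0 <= g m) -> esum_from 0 g = 1%E ->
  (emean g < +oo)%E ->
  (* service-time pmfs s_r(n), n >= 1 *)
  (forall r, (a <= r <= b)%N ->
     [/\ s r 0%N = 0, (forall n, 0 <= s r n), esum_from 0 (s r) = 1%E
       & (emean (s r) < +oo)%E]) ->
  (* vacation-time pmf *)
  v 0%N = 0 -> (forall n, 0 <= v n) -> esum_from 0 v = 1%E ->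
  (emean v < +oo)%E ->
  (* stability rho = lam gbar / (b mu_b) < 1 *)
  (let gbar := fine (emean g) in
   let mu_b := (fine (emean (s b)))^-1 in
   lam * gbar / (b%:R * mu_b) < 1) ->
  (* nonnegativity of the stationary probabilities *)
  (forall n, (n < a)%N -> 0 <= p0 n) ->
  (forall n r u, (a <= r <= b)%N -> (1 <= u)%N -> 0 <= p n r u) ->
  (forall n u, (1 <= u)%N -> 0 <= Q n u) ->
  (* (E1) *)
  p0 0%N = (1 - delta) * ((1 - lam) * p0 0%N + (1 - lam) * Q 0%N 1%N) ->
  (* (E2) *)
  (forall n, (1 <= n <= a - 1)%N ->
     p0 n = (1 - delta) * ((1 - lam) * p0 n
              + lam * \sum_(1 <= i < n.+1) g i * p0 (n - i)%N
              + (1 - lam) * Q n 1%N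
              + lam * \sum_(1 <= i < n.+1) g i * Q (n - i)%N 1%N)) ->
  (* (E3) *)
  (forall r u, (a <= r <= b)%N -> (1 <= u)%N ->
     p 0%N r u = (1 - lam) * p 0%N r u.+1
       + s r u * (\sum_(a <= m < b.+1)
                     ((1 - lam) * p r m 1%N
                      + lam * \sum_(1 <= i < r.+1) g i * p (r - i)%N m 1%N)
                  + (1 - lam) * Q r 1%N
                  + lam * \sum_(1 <= i < r.+1) g i * Q (r - i)%N 1%N
                  + (1 - delta) * lam * \sum_(0 <= i < a) g (r - i)%N * p0 i)) ->
  (* (E4) *)
  (forall n r u, (1 <= n)%N -> (a <= r <= b - 1)%N -> (1 <= u)%N ->
     p n r u = (1 - lam) * p n r u.+1
       + lam * \sum_(1 <= i < n.+1) g i * p (n - i)%N r u.+1) ->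
  (* (E5) *)
  (forall n u, (1 <= n)%N -> (1 <= u)%N ->
     p n b u = (1 - lam) * p n b u.+1
       + lam * \sum_(1 <= i < n.+1) g i * p (n - i)%N b u.+1
       + s b u * (\sum_(a <= m < b.+1)
                     ((1 - lam) * p (n + b)%N m 1%N
                      + lam * \sum_(1 <= i < (n + b).+1)
                                 g i * p (n + b - i)%N m 1%N)
                  + (1 - lam) * Q (n + b)%N 1%N
                  + lam * \sum_(1 <= i < (n + b).+1) g i * Q (n + b - i)%N 1%N
                  + (1 - delta) * lam
                      * \sum_(0 <= i < a) g (n + b - i)%N * p0 i)) ->
  (* (E6) *)
  (forall u, (1 <= u)%N ->
     Q 0%N u = (1 - lam) * Q 0%N u.+1
       + (1 - lam) * (\sum_(a <= m < b.+1) p 0%N m 1%N + delta * Q 0%N 1%N)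
         * v u) ->
  (* (E7) *)
  (forall n u, (1 <= n <= a - 1)%N -> (1 <= u)%N ->
     Q n u = (1 - lam) * Q n u.+1
       + lam * \sum_(1 <= i < n.+1) g i * Q (n - i)%N u.+1
       + v u * ((1 - lam) * (\sum_(a <= m < b.+1) p n m 1%N + delta * Q n 1%N)
                + lam * \sum_(1 <= i < n.+1)
                          g i * (\sum_(a <= m < b.+1) p (n - i)%N m 1%N
                                 + delta * Q (n - i)%N 1%N))) ->
  (* (E8) *)
  (forall n u, (a <= n)%N -> (1 <= u)%N ->
     Q n u = (1 - lam) * Q n u.+1
       + lam * \sum_(1 <= i < n.+1) g i * Q (n - i)%N u.+1) ->
  (* (N) *)
  (((1 - delta) * \sum_(0 <= n < a) p0 n)%:E
   + \sum_(0 <= n <oo) \sum_(a <= r < b.+1) \sum_(1 <= u <oo) (p n r u)%:E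
   + \sum_(0 <= n <oo) \sum_(1 <= u <oo) (Q n u)%:E = 1)%E ->
  (* conclusion *)
  let tau := fine (tauE a b p Q) in
  let EV := fine (emean v) in
  let smean := fun r => fine (emean (s r)) in
  tauE a b p Q
  = (((1 - (1 - delta) * \sum_(0 <= n < a) p0 n)%:E)
     / omegaE a b lam delta tau EV g smean p Q)%E.
Proof.
(* The finite mean of the group size and the stability condition are only needed
   for the existence of the stationary distribution, not for this identity. *)
move=> a_gt0 a_le_b lam_gt0 lam_lt1 delta01 g0 g_ge0 g1 _ s_pmf v0 v_ge0 v1 v_mean _
  p0_ge0 p_ge0 Q_ge0 E1 E2 E3 E4 E5 E6 E7 E8 normalization.
exact: (tau_formula a_gt0 a_le_b lam_gt0 lam_lt1 delta01 g0 g_ge0 g1 s_pmf v0 v_ge0 v1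
  v_mean p0_ge0 p_ge0 Q_ge0 E1 E2 E3 E4 E5 E6 E7 E8 normalization).
Qed.
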